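(* Let $0<q<1$, $q^*=2-q$, and let $X_1$ be a real random variable. Define $\theta(a)=\left[\mathbb{E}\exp_{q^*}(aX_1)\right]^{1-q}a$. Then $\theta$ is a strictly increasing function of $a$ on the open interval of values $a$ for which $0<\mathbb{E}\exp_{q^*}(aX_1)<+\infty$.
   Context: For $q\in(0,2)$, $q\ne1$, the $q$-deformed exponential is $\exp_q(u)=[1+(1-q)u]_+^{1/(1-q)}$ for real $u$ (value in $[0,+\infty]$), where $[u]_+=\max(u,0)$. *)

From HB Require Import structures.
From mathcomp Require Import all_boot all_order all_algebra.
From mathcomp Require Import all_classical all_reals all_analysis.
Set Implicit Arguments. Unset Strict Implicit. Unset Printing Implicit Defensive.
Import Order.TTheory GRing.Theory Num.Theory.
Local Open Scope ring_scope.

(* q-deformed exponential, valued in [0, +oo]: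
   exp_q(u) = [1 + (1-q) u]_+ ^ (1/(1-q)),  for q in (0,2), q <> 1.
   When the base is 0 and the exponent 1/(1-q) is negative (q > 1),
   the value is +oo; otherwise it is the real power (0^e = 0 for e > 0). *)
Definition expq {R : realType} (q u : R) : \bar R :=
  let b := Num.max (1 + (1 - q) * u) 0 in
  if (b == 0) && (1 < q) then +oo%E else (b `^ (1 / (1 - q)))%:E.

(* For a > 0 and c = 1 - q, theta(a)^(1/c) = E[a^(1/c) exp_{2-q}(a X)] and
   a^(1/c) [1 - c a x]_+^(-1/c) = [1/a - c x]_+^(-1/c), which increases
   strictly with a wherever it is finite; integrating gives strict
   monotonicity of theta on the positive half-line.  The negative
   half-line follows by replacing X with -X, and theta has the sign of a. *)
From mathcomp Require Import all_boot all_order all_algebra.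
From mathcomp Require Import all_classical all_reals all_analysis measurable_realfun.
From mathcomp Require Import ring lra.
Import Order.TTheory GRing.Theory Num.Theory.
Local Open Scope ring_scope.

Lemma powR_rootM {R : realType} {c s x : R} : 0 < c -> 0 <= s -> 0 <= x ->
  (s `^ c^-1 * x) `^ c = x `^ c * s.
Proof.
move=> c0 s0 x0; rewrite powRM ?powR_ge0 // -powRrM mulVf ?gt_eqF //.
by rewrite powRr1 // mulrC.
Qed.

Lemma powR_rootM_lt {R : realType} {c s t x y : R} : 0 < c -> 0 <= s -> 0 <= t ->
  0 <= x -> 0 <= y -> s `^ c^-1 * x < t `^ c^-1 * y -> x `^ c * s < y `^ c * t.
Proof.
move=> c0 s0 t0 x0 y0 lt_st.
rewrite -(powR_rootM c0 s0 x0) -(powR_rootM c0 t0 y0).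
by apply: gt0_ltr_powR; rewrite ?nnegrE ?mulr_ge0 ?powR_ge0.
Qed.

Lemma ltr_pM_across0 {R : realDomainType} {x y a b : R} : 0 < x -> 0 < y ->
  a <= 0 -> 0 <= b -> a < b -> x * a < y * b.
Proof.
move=> x0 y0 a_le0 b_ge0 ab; have [a_lt0|a_ge0] := ltP a 0.
  by apply: (@lt_le_trans _ _ 0); rewrite ?pmulr_rlt0 ?pmulr_rge0.
have -> : a = 0 by apply/le_anti/andP.
by rewrite mulr0 pmulr_rgt0 // (le_lt_trans a_ge0).
Qed.

Lemma subr1M_factor {R : numFieldType} (c s y : R) : 0 < s ->
  1 - c * s * y = s * (s^-1 - c * y).
Proof. by move=> s0; field; rewrite gt_eqF. Qed.

Lemma powR_rootM_powRN {R : realType} (c s y : R) : 0 < c -> 0 < s ->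
  0 < 1 - c * s * y ->
  s `^ c^-1 * (1 - c * s * y) `^ (- c^-1) = (s^-1 - c * y) `^ (- c^-1).
Proof.
move=> c0 s0; rewrite subr1M_factor // pmulr_rgt0 // => w0.
by rewrite powRM ?ltW // mulrA powRN mulfV ?mul1r // gt_eqF // powR_gt0.
Qed.

Lemma dual_kernel_lt {R : realType} {c s t y : R} : 0 < c -> 0 < s -> s < t ->
  0 < 1 - c * t * y ->
  0 < 1 - c * s * y /\
  s `^ c^-1 * (1 - c * s * y) `^ (- c^-1) < t `^ c^-1 * (1 - c * t * y) `^ (- c^-1).
Proof.
move=> c0 s0 st bt; have t0 : 0 < t := lt_trans s0 st.
have wt : 0 < t^-1 - c * y by rewrite -(pmulr_rgt0 _ t0) -subr1M_factor.
have wst : t^-1 - c * y < s^-1 - c * y by rewrite ltrD2r ltf_pV2 ?posrE.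
have bs : 0 < 1 - c * s * y by rewrite subr1M_factor // pmulr_rgt0 //; lra.
split => //; rewrite !powR_rootM_powRN // !powRN ltf_pV2 ?posrE ?powR_gt0 //;
  try lra.
by apply: gt0_ltr_powR; rewrite ?invr_gt0 ?nnegrE ?ltW //; lra.
Qed.

Section dual_q_exponential.
Variables (R : realType) (q : R).
Hypothesis q_lt1 : q < 1.

Lemma expq_dualE (u : R) :
  expq (2 - q) u = if 1 - (1 - q) * u <= 0 then +oo%E
                   else ((1 - (1 - q) * u) `^ (- (1 - q)^-1))%:E.
Proof.
rewrite /expq.
have -> : 1 < 2 - q by move: q_lt1; lra.
have -> : 1 + (1 - (2 - q)) * u = 1 - (1 - q) * u by ring.
have -> : 1 / (1 - (2 - q)) = - (1 - q)^-1.
  by rewrite (_ : 1 - (2 - q) = - (1 - q)) ?invrN ?div1r //; ring.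
by case: leP => [_|h]; rewrite ?eqxx // gt_eqF.
Qed.

Lemma expq_dual_ge0 (u : R) : (0 <= expq (2 - q) u)%E.
Proof. by rewrite expq_dualE; case: ifP; rewrite ?leey ?lee_fin ?powR_ge0. Qed.

Lemma measurable_expq_dual d (T : measurableType d) (f : T -> R) :
  measurable_fun [set: T] f ->
  measurable_fun [set: T] (fun x => expq (2 - q) (f x)).
Proof.
move=> mf; have mb : measurable_fun [set: T] (fun x => 1 - (1 - q) * f x).
  by apply: measurable_funB => //; apply: measurable_funM.
rewrite (_ : (fun x => _) = fun x => if 1 - (1 - q) * f x <= 0 then +oo%E
           else ((1 - (1 - q) * f x) `^ (- (1 - q)^-1))%:E); last first.
  by apply/funext => x; rewrite expq_dualE.
apply: measurable_fun_ifT; first exact: measurable_fun_ler.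
  exact: measurable_cst.
exact/measurable_EFinP/(measurableT_comp (measurable_powR _) mb).
Qed.

Lemma scaled_expq_dual_lt (s t y : R) : 0 < s -> s < t ->
  ((t `^ (1 - q)^-1)%:E * expq (2 - q) (t * y) < +oo)%E ->
  ((s `^ (1 - q)^-1)%:E * expq (2 - q) (s * y) <
   (t `^ (1 - q)^-1)%:E * expq (2 - q) (t * y))%E.
Proof.
move=> s0 st; rewrite !expq_dualE !mulrA.
have c0 : 0 < 1 - q by rewrite subr_gt0.
case: (leP (1 - (1 - q) * t * y) 0) => [_|bt].
  by rewrite gt0_muley ?ltxx // lte_fin powR_gt0 //; lra.
have [bs lt_st] := dual_kernel_lt c0 s0 st bt.
by move=> _; rewrite leNgt bs -!EFinM lte_fin.
Qed.

Lemma scaled_expq_dual_le (s t y : R) : 0 < s -> s < t ->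
  ((s `^ (1 - q)^-1)%:E * expq (2 - q) (s * y) <=
   (t `^ (1 - q)^-1)%:E * expq (2 - q) (t * y))%E.
Proof.
move=> s0 st.
set rhs := ((t `^ (1 - q)^-1)%:E * expq (2 - q) (t * y))%E.
have [rhs_fin|] := ltP rhs +oo%E; first exact/ltW/scaled_expq_dual_lt.
by rewrite leye_eq => /eqP ->; rewrite leey.
Qed.

End dual_q_exponential.

Section strict_integral.
Context {R : realType} {d : measure_display} {T : measurableType d}.
Variable mu : {measure set T -> \bar R}.
Hypothesis mu_setT_gt0 : (0 < mu setT)%E.
Local Open Scope ereal_scope.

Lemma ae_gt0_integral_gt0 (H : T -> \bar R) : measurable_fun setT H ->
  (forall x, 0 <= H x) -> {ae mu, forall x, 0 < H x} ->
  0 < \int[mu]_x H x.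
Proof.
move=> mH H0 aeH; rewrite lt0e integral_ge0 // andbT; apply/negP => /eqP iH0.
have /(ae_eq_integral_abs _ measurableT mH) aeH0 : \int[mu]_x `|H x| = 0.
  by under eq_integral do rewrite gee0_abs //.
have [N [mN muN0 subN]] : {ae mu, forall x, setT x -> False}.
  apply: filterS2 aeH aeH0 => x Hx0 /(_ I) /= Hx _.
  by move: Hx0; rewrite Hx ltxx.
have : mu setT <= mu N.
  by apply: le_measure; rewrite ?inE // => x _; apply: subN => /(_ I).
by rewrite muN0 leNgt mu_setT_gt0.
Qed.

Lemma ge0_lt_integral (F G : T -> \bar R) :
  measurable_fun setT F -> measurable_fun setT G ->
  (forall x, 0 <= F x) -> (forall x, F x <= G x) ->
  (forall x, G x < +oo -> F x < G x) ->
  \int[mu]_x G x < +oo -> \int[mu]_x F x < \int[mu]_x G x.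
Proof.
move=> mF mG F0 FG FGlt Glt.
have G0 x : 0 <= G x by apply: le_trans (F0 x) (FG x).
have aeGfin : {ae mu, forall x, setT x -> G x \is a fin_num}.
  apply: (integrable_ae measurableT); apply/integrableP; split => //.
  by under eq_integral do rewrite gee0_abs //.
have Ffin x : G x \is a fin_num -> F x \is a fin_num.
  by move=> Gx; rewrite ge0_fin_numE // (le_lt_trans (FG x)) // ltey_eq Gx.
pose H x := (Num.max (fine (G x) - fine (F x)) 0)%:E.
have mH : measurable_fun setT H.
  apply/measurable_EFinP; apply: measurable_maxr => //.
  by apply: measurable_funB; apply: measurableT_comp.
have H0 x : 0 <= H x by rewrite lee_fin le_max lexx orbT.
have GFH x : G x \is a fin_num -> G x = F x + H x.
  move=> Gx; rewrite /H max_l; last by rewrite subr_ge0 -lee_fin !fineK ?Ffin.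
  by rewrite EFinB !fineK ?Ffin // [F x + _]addeC subeK ?Ffin.
have iGFH : \int[mu]_x G x = \int[mu]_x F x + \int[mu]_x H x.
  rewrite -ge0_integralD //; apply: ae_eq_integral => //.
    exact: emeasurable_funD.
  by apply: filterS aeGfin => x /(_ I) /GFH.
have iH_gt0 : 0 < \int[mu]_x H x.
  apply: ae_gt0_integral_gt0 => //; apply: filterS aeGfin => x /(_ I) Gx.
  have := FGlt x; rewrite ltey_eq Gx => /(_ isT).
  rewrite -(fineK (Ffin _ Gx)) -(fineK Gx) lte_fin -subr_gt0 => FxGx.
  by rewrite /H max_l ?ltW // lte_fin.
have iFfin : \int[mu]_x F x \is a fin_num.
  rewrite ge0_fin_numE ?integral_ge0 //; apply: le_lt_trans Glt.
  by apply: ge0_le_integral.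
by rewrite iGFH -{1}(adde0 (\int[mu]_x F x)) lteD2lE.
Qed.

End strict_integral.

Definition qmgf {R : realType} {d : measure_display} {T : measurableType d}
  (P : probability T R) (X : T -> R) (q a : R) : \bar R :=
  (\int[P]_x expq (2 - q) (a * X x))%E.

Definition qtheta {R : realType} {d : measure_display} {T : measurableType d}
  (P : probability T R) (X : T -> R) (q a : R) : R :=
  fine (qmgf P X q a) `^ (1 - q) * a.

Section qtheta_monotone.
Context {R : realType} {d : measure_display} {T : measurableType d}.
Variables (P : probability T R) (q : R).
Hypothesis q_lt1 : q < 1.

Lemma qmgf_ge0 (X : T -> R) (a : R) : (0 <= qmgf P X q a)%E.
Proof. by apply: integral_ge0 => x _; exact: expq_dual_ge0. Qed.

Lemma qmgfN (X : T -> R) (a : R) : qmgf P (fun x => - X x) q (- a) = qmgf P X q a.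
Proof. by rewrite /qmgf; under eq_integral do rewrite mulrNN. Qed.

Lemma qmgf_scaled_lt (X : T -> R) (s t : R) : measurable_fun setT X ->
  0 < s -> s < t -> qmgf P X q s \is a fin_num -> qmgf P X q t \is a fin_num ->
  s `^ (1 - q)^-1 * fine (qmgf P X q s) < t `^ (1 - q)^-1 * fine (qmgf P X q t).
Proof.
move=> mX s0 st sfin tfin.
have mexpq a : measurable_fun setT (fun x => expq (2 - q) (a * X x)).
  by apply: measurable_expq_dual => //; apply: measurable_funM.
have scaleE a : (\int[P]_x ((a `^ (1 - q)^-1)%:E * expq (2 - q) (a * X x)) =
                 (a `^ (1 - q)^-1)%:E * qmgf P X q a)%E.
  by rewrite ge0_integralZl_EFin ?powR_ge0 // => x _; exact: expq_dual_ge0.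
have P_setT_gt0 : (0 < P setT)%E by rewrite probability_setT lte01.
have : (\int[P]_x ((s `^ (1 - q)^-1)%:E * expq (2 - q) (s * X x)) <
         \int[P]_x ((t `^ (1 - q)^-1)%:E * expq (2 - q) (t * X x)))%E.
  apply: (ge0_lt_integral _ P_setT_gt0).
  - exact: measurable_funeM.
  - exact: measurable_funeM.
  - by move=> x; rewrite mule_ge0 ?lee_fin ?powR_ge0 ?expq_dual_ge0.
  - by move=> x; apply: scaled_expq_dual_le.
  - by move=> x; apply: scaled_expq_dual_lt.
  - by rewrite scaleE -(fineK tfin) -EFinM ltry.
by rewrite !scaleE -(fineK sfin) -(fineK tfin) -!EFinM lte_fin.
Qed.

Lemma qthetaN (X : T -> R) (a : R) :
  qtheta P (fun x => - X x) q (- a) = - qtheta P X q a.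
Proof. by rewrite /qtheta qmgfN mulrN. Qed.

Lemma qtheta_lt_pos (X : T -> R) (s t : R) : measurable_fun setT X ->
  0 < s -> s < t -> qmgf P X q s \is a fin_num -> qmgf P X q t \is a fin_num ->
  qtheta P X q s < qtheta P X q t.
Proof.
move=> mX s0 st sfin tfin; have c0 : 0 < 1 - q by rewrite subr_gt0.
have fine_qmgf_ge0 u : 0 <= fine (qmgf P X q u) by rewrite fine_ge0 ?qmgf_ge0.
have t0 : 0 < t := lt_trans s0 st.
apply: (powR_rootM_lt c0 (ltW s0) (ltW t0)); rewrite ?fine_qmgf_ge0 //.
exact: qmgf_scaled_lt.
Qed.

End qtheta_monotone.

Theorem lemma1 (R : realType) (d : measure_display) (T : measurableType d)
  (P : probability T R) (X : T -> R) (mX : measurable_fun setT X) (q : R) :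
  0 < q < 1 ->
  let qs := 2 - q in
  let E := fun a : R => (\int[P]_x expq qs (a * X x))%E in
  let theta := fun a : R => (fine (E a)) `^ (1 - q) * a in
  forall a b : R,
    (0 < E a < +oo)%E -> (0 < E b < +oo)%E -> a < b -> theta a < theta b.
Proof.
move=> /andP[_ q_lt1] qs E theta a b Ea Eb ab.
change (qtheta P X q a < qtheta P X q b).
have qmgf_fin u : (0 < E u < +oo)%E -> qmgf P X q u \is a fin_num.
  by case/andP=> _ Eu; rewrite ge0_fin_numE ?qmgf_ge0.
have [a_gt0|a_le0] := ltP 0 a.
  exact: qtheta_lt_pos mX a_gt0 ab (qmgf_fin _ Ea) (qmgf_fin _ Eb).
have [b_lt0|b_ge0] := ltP b 0.
  rewrite -ltrN2 -!qthetaN; apply: qtheta_lt_pos; rewrite ?qmgfN ?qmgf_fin //.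
  - exact: measurable_funN.
  - by rewrite oppr_gt0.
  - by rewrite ltrN2.
have weight_gt0 u : (0 < E u < +oo)%E -> 0 < fine (qmgf P X q u) `^ (1 - q).
  by move=> Eu; rewrite powR_gt0 // fine_gt0.
exact: ltr_pM_across0 (weight_gt0 a Ea) (weight_gt0 b Eb) a_le0 b_ge0 ab.
Qed.
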